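(* Let $\Sigma$ be an oriented graph on $n$ vertices with skew adjacency matrix $S$ and walk-matrix $W=W(\Sigma)$ satisfying $\det W\neq 0$, let $P$ be a permutation matrix with $P^{\mathrm T}SP=S^{\mathrm T}$, let $p$ be an odd prime, and for $\lambda\in\{1,-1\}$ let $V_\lambda\subset\mathbb{F}_p^n$ denote the eigenspace of $P$ (viewed over $\mathbb{F}_p$) for the eigenvalue $\lambda$. If $n$ is even then $\dim V_1=\dim V_{-1}=n/2$; if $n$ is odd then $\dim V_1=(n+1)/2$ and $\dim V_{-1}=(n-1)/2$.
   Context: The skew adjacency matrix $S=(S_{ij})$ of an oriented graph on vertices $v_1,\dots,v_n$ has $S_{ij}=1$ if $(v_i,v_j)$ is a directed edge, $S_{ij}=-1$ if $(v_j,v_i)$ is a directed edge, and $S_{ij}=0$ otherwise. The walk-matrix is $W(\Sigma)=[e,Se,\ldots,S^{n-1}e]$ with $e$ the all-ones vector. *)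

From mathcomp Require Import all_boot all_order all_algebra all_fingroup.
Set Implicit Arguments. Unset Strict Implicit. Unset Printing Implicit Defensive.
Import GRing.Theory Num.Theory.
Local Open Scope ring_scope.

(* An oriented graph on vertex set 'I_n: a relation E (E i j = "(v_i,v_j) is
   a directed edge") with no pair of opposite arcs; this also forbids loops. *)
Definition oriented_graph n (E : rel 'I_n) : Prop :=
  forall i j, E i j -> ~~ E j i.

Definition skew_adj n (E : rel 'I_n) : 'M[int]_n :=
  \matrix_(i, j) (if E i j then 1 else if E j i then -1 else 0).

(* Walk matrix W = [e, S e, ..., S^(n-1) e]: column k is S^k e. *)
Definition walk_matrix n (S : 'M[int]_n) : 'M[int]_n :=
  \matrix_(i, k) ((S ^+ k) *m (const_mx 1 : 'cV[int]_n)) i (@ord0 0).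

(* Eigenspace of a square matrix A (acting on COLUMN vectors v, A v = a v),
   represented as a matrix whose row space is {v^T | (A - a) v = 0}. *)
Definition col_eigenspace (F : fieldType) n (A : 'M[F]_n) (a : F) : 'M[F]_n :=
  kermx ((A - a%:M)^T).

(* Conjugation by P sends S to S^T = -S and fixes the all-ones vector e, so
   P^T maps the column S^k e of the walk matrix W to (-1)^k S^k e: P^T W = W D
   with D = diag((-1)^k).  Over Q the matrix W is invertible, so P is similar
   to D and rank(P - 1) = floor(n/2), rank(P + 1) = ceil(n/2).  Modulo p the
   matrix W may become singular, but ranks of integer matrices can only drop
   under reduction mod p, while rank(P - 1) + rank(P + 1) >= rank(2 I) = n
   because 2 is invertible in F_p.  Hence both ranks are preserved mod p. *)

From mathcomp Require Import all_boot all_order all_algebra all_fingroup.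
From mathcomp Require Import zify.
Set Implicit Arguments. Unset Strict Implicit. Unset Printing Implicit Defensive.
Import GRing.Theory Num.Theory.
Local Open Scope ring_scope.

Lemma sum_odd_ord n : (\sum_(k < n) odd k)%N = n./2.
Proof.
elim: n => [|n IHn]; first by rewrite big_ord0.
by rewrite big_ord_recr /= IHn uphalf_half addnC.
Qed.

Lemma sum_even_ord n : (\sum_(k < n) ~~ odd k)%N = uphalf n.
Proof.
elim: n => [|n IHn]; first by rewrite big_ord0.
by rewrite big_ord_recr /= IHn addnC uphalf_half; case: odd.
Qed.

Lemma half_add_uphalf n : (n./2 + uphalf n)%N = n.
Proof. by rewrite uphalf_half addnCA addnn odd_double_half. Qed.

Lemma half_pred_odd n : odd n -> n.-1./2 = n./2.
Proof. by case: n => //= n; rewrite uphalf_half => /negbTE ->. Qed.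

Lemma rank_diag_mx (F : fieldType) n (d : 'rV[F]_n) :
  \rank (diag_mx d) = (\sum_(i < n) (d ord0 i != 0%R))%N.
Proof.
elim: n d => [|n IHn] d.
  by rewrite big_ord0; apply/eqP; rewrite -leqn0 rank_leq_row.
rewrite big_ord_recl -[d in diag_mx d](hsubmxK (d : 'rV_(1 + n))).
rewrite (diag_mx_row (lsubmx (d : 'rV_(1 + n)))).
rewrite (rank_diag_block_mx (diag_mx (lsubmx (d : 'rV_(1 + n))))) IHn.
congr addn; last first.
  by apply: eq_bigr => i _; rewrite mxE; congr (d 0 _ != 0); apply: val_inj.
have -> : diag_mx (lsubmx (d : 'rV_(1 + n))) = (d 0 0)%:M.
  apply/matrixP => i j; rewrite !ord1 !mxE /=.
  by congr (d 0 _ *+ _); apply: val_inj.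
have [->|d00] := eqVneq (d 0 0) 0; first by rewrite raddf0 mxrank0.
by rewrite mxrank_unit // unitmxE det_scalar1 unitfE.
Qed.

Lemma mxrank_sub_scalar_add (F : fieldType) n (A : 'M[F]_n) (a b : F) :
  a != b -> (n <= \rank (A - a%:M)%R + \rank (A - b%:M)%R)%N.
Proof.
move=> neq_ab.
have unit_ab : ((a - b)%:M : 'M[F]_n) \in unitmx.
  by rewrite unitmxE det_scalar unitfE expf_neq0 // subr_eq0.
rewrite -{1}(mxrank_unit unit_ab) addnC.
have -> : (a - b)%:M = (A - b%:M) - (A - a%:M) :> 'M_n.
  by rewrite raddfB opprD opprK addrACA subrr add0r addrC.
by rewrite (leq_trans (mxrank_add _ _)) // mxrank_opp.
Qed.

Lemma mxrank_sub_scalar_conj (F : fieldType) n (A W D : 'M[F]_n) (c : F) :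
  W \in unitmx -> A *m W = W *m D -> \rank (A - c%:M) = \rank (D - c%:M).
Proof.
move=> unitW AW_WD.
rewrite -(mxrankMfree _ (_ : row_free W)) ?row_free_unit //.
rewrite mulmxBl AW_WD -scalar_mxC.
by rewrite -mulmxBr (eqmxMfull _ (_ : row_full W)) ?row_full_unit.
Qed.

Lemma mxrank_col_eigenspace (F : fieldType) n (A : 'M[F]_n) (a : F) :
  \rank (col_eigenspace A a) = (n - \rank (A - a%:M)%R)%N.
Proof. by rewrite /col_eigenspace mxrank_ker mxrank_tr. Qed.

Lemma exists_unit_minor (F : fieldType) m n (A : 'M[F]_(m, n)) :
  exists (f : 'I_(\rank A) -> 'I_m) (g : 'I_(\rank A) -> 'I_n),
    mxsub f g A \in unitmx.
Proof.
set B := rowsub (maxrankfun A) A.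
have fullBt : row_full B^T.
  by rewrite /row_full mxrank_tr; apply: maxrowsub_free.
exists (maxrankfun A), (fullrankfun fullBt).
have -> : mxsub (maxrankfun A) (fullrankfun fullBt) A
          = (rowsub (fullrankfun fullBt) B^T)^T.
  by apply/matrixP => i j; rewrite !mxE.
by rewrite unitmx_tr fullrowsub_unit.
Qed.

Lemma unit_minor_le_rank (F : fieldType) m n r (A : 'M[F]_(m, n))
    (f : 'I_r -> 'I_m) (g : 'I_r -> 'I_n) :
  mxsub f g A \in unitmx -> (r <= \rank A)%N.
Proof.
move=> /mxrank_unit <-.
have -> : mxsub f g A = rowsub f 1%:M *m (A *m colsub g 1%:M).
  by rewrite mulmx_colsub mulmx1 -rowsubE; apply/matrixP => i j; rewrite !mxE.
by apply: leq_trans (mxrankM_maxr _ _) _; apply: mxrankM_maxl.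
Qed.

(* A minor of A that is nonzero in F is a nonzero integer. *)
Lemma mxrank_map_intr_le (F : fieldType) (K : numFieldType) m n
    (A : 'M[int]_(m, n)) :
  (\rank (map_mx (intr : int -> F) A) <= \rank (map_mx (intr : int -> K) A))%N.
Proof.
have [f [g]] := exists_unit_minor (map_mx (intr : int -> F) A).
rewrite -map_mxsub unitmxE det_map_mx unitfE => det_neq0.
apply: (unit_minor_le_rank (f := f) (g := g)).
rewrite -map_mxsub unitmxE det_map_mx unitfE intr_eq0.
by apply: contraNneq det_neq0 => ->; rewrite rmorph0.
Qed.

Definition sign_diag (R : pzRingType) n : 'M[R]_n :=
  diag_mx (\row_(k < n) (-1) ^+ k).

Lemma mxrank_sign_diag_sub_scalar (F : fieldType) n (c : F) :
  \rank (sign_diag F n - c%:M) = (\sum_(k < n) ((-1) ^+ k != c))%N.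
Proof.
rewrite /sign_diag -diag_const_mx -raddfB rank_diag_mx.
by apply: eq_bigr => k _; rewrite !mxE subr_eq0.
Qed.

Lemma mxrank_sign_diag_sub1 (F : fieldType) n :
  2%:R != 0 :> F -> \rank (sign_diag F n - 1%:M) = n./2.
Proof.
move=> two_neq0; rewrite mxrank_sign_diag_sub_scalar -sum_odd_ord.
apply: eq_bigr => k _; rewrite -signr_odd.
by case: odd; rewrite ?eqxx // -subr_eq0 -opprD oppr_eq0 -mulr2n two_neq0.
Qed.

Lemma mxrank_sign_diag_subN1 (F : fieldType) n :
  2%:R != 0 :> F -> \rank (sign_diag F n - (-1)%:M) = uphalf n.
Proof.
move=> two_neq0; rewrite mxrank_sign_diag_sub_scalar -sum_even_ord.
apply: eq_bigr => k _; rewrite -signr_odd.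
by case: odd; rewrite ?eqxx // -subr_eq0 opprK -mulr2n two_neq0.
Qed.

Lemma map_sign_diag (R R' : pzRingType) (f : {rmorphism R -> R'}) n :
  map_mx f (sign_diag R n) = sign_diag R' n.
Proof. by apply/matrixP => i j; rewrite !mxE rmorphMn rmorph_sign. Qed.

Lemma perm_mx_conjX (R : pzRingType) n (s : 'S_n) (A : 'M[R]_n) k :
  (perm_mx s)^T *m A ^+ k *m perm_mx s
  = ((perm_mx s)^T *m A *m perm_mx s) ^+ k.
Proof.
have PPt : perm_mx s *m (perm_mx s)^T = 1%:M :> 'M[R]_n.
  by rewrite tr_perm_mx -perm_mxM mulgV perm_mx1.
have PtP : (perm_mx s)^T *m perm_mx s = 1%:M :> 'M[R]_n.
  by rewrite tr_perm_mx -perm_mxM mulVg perm_mx1.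
elim: k => [|k IHk]; first by rewrite !expr0 mulmx1 PtP.
rewrite !exprSr -!mulmxE -IHk !mulmxA.
by rewrite -(mulmxA _ (perm_mx s) (perm_mx s)^T) PPt mulmx1.
Qed.

Lemma exprN_mx (R : comPzRingType) n (A : 'M[R]_n) k :
  (- A) ^+ k = (-1) ^+ k *: A ^+ k.
Proof.
elim: k => [|k IHk]; first by rewrite !expr0 scale1r.
by rewrite !exprS IHk mulN1r scaleNr -!mulmxE mulNmx scalemxAr.
Qed.

Lemma map_perm_mx_sub_scalar (R R' : pzRingType) (f : {rmorphism R -> R'}) n
    (s : 'S_n) (c : R) :
  map_mx f (perm_mx s - c%:M) = perm_mx s - (f c)%:M.
Proof. by rewrite map_mxB map_perm_mx map_scalar_mx. Qed.

Lemma skew_adj_tr n (E : rel 'I_n) :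
  oriented_graph E -> (skew_adj E)^T = - skew_adj E.
Proof.
move=> orientedE; apply/matrixP => i j; rewrite !mxE.
have := orientedE i j; have := orientedE j i.
by case: (E i j); case: (E j i) => //=; rewrite ?oppr0 ?opprK // => _ /(_ isT).
Qed.

Lemma walk_matrix_perm_conj n (S : 'M[int]_n) (s : 'S_n) :
  (perm_mx s)^T *m S *m perm_mx s = - S ->
  (perm_mx s)^T *m walk_matrix S = walk_matrix S *m sign_diag int n.
Proof.
move=> PSP; set e : 'cV[int]_n := const_mx 1.
have Pe : perm_mx s *m e = e by rewrite -row_permE row_perm_const.
apply/matrixP => i k.
have -> : ((perm_mx s)^T *m walk_matrix S) i k
          = ((perm_mx s)^T *m (S ^+ k *m e)) i 0.
  by rewrite !mxE; apply: eq_bigr => j _; rewrite !mxE.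
rewrite -{1}Pe !mulmxA perm_mx_conjX PSP exprN_mx -scalemxAl.
by rewrite mul_mx_diag !mxE mulrC.
Qed.

Section PermConjugateSkew.

Variables (n : nat) (S : 'M[int]_n) (s : 'S_n).
Hypothesis detW : \det (walk_matrix S) != 0.
Hypothesis PSP : (perm_mx s)^T *m S *m perm_mx s = - S.

Lemma mxrank_perm_sub_scalar_char0 (K : numFieldType) (c : K) :
  \rank (perm_mx s - c%:M) = \rank (sign_diag K n - c%:M).
Proof.
rewrite -mxrank_tr linearB /= tr_scalar_mx.
apply: (@mxrank_sub_scalar_conj _ _ _ (map_mx intr (walk_matrix S))).
  by rewrite unitmxE det_map_mx unitfE intr_eq0.
have := congr1 (map_mx (intr : int -> K)) (walk_matrix_perm_conj PSP).
by rewrite !map_mxM -map_trmx map_perm_mx map_sign_diag.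
Qed.

Lemma mxrank_perm_sub_scalar_le (F : fieldType) (c : int) :
  (\rank (perm_mx s - (c%:~R)%:M : 'M[F]_n)%R
     <= \rank (sign_diag rat n - (c%:~R)%:M)%R)%N.
Proof.
rewrite -mxrank_perm_sub_scalar_char0 -!(map_perm_mx_sub_scalar intr).
exact: mxrank_map_intr_le.
Qed.

Lemma mxrank_perm_sub_sign (F : fieldType) : 2%:R != 0 :> F ->
  \rank (perm_mx s - 1%:M : 'M[F]_n) = n./2
  /\ \rank (perm_mx s - (-1)%:M : 'M[F]_n) = uphalf n.
Proof.
move=> two_neq0.
have le_half := mxrank_perm_sub_scalar_le F 1.
rewrite mxrank_sign_diag_sub1 // !mulr1z in le_half.
have le_uphalf := mxrank_perm_sub_scalar_le F (-1).
rewrite mxrank_sign_diag_subN1 // !mulrN1z in le_uphalf.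
have := @mxrank_sub_scalar_add F n (perm_mx s) 1 (-1).
rewrite -subr_eq0 opprK -mulr2n two_neq0 -{1}(half_add_uphalf n) => /(_ isT).
set a := \rank _ in le_half *; set b := \rank _ in le_uphalf *; lia.
Qed.

End PermConjugateSkew.

Theorem corollary2p12 (n : nat) (E : rel 'I_n) (s : 'S_n) (p : nat) :
  oriented_graph E ->
  \det (walk_matrix (skew_adj E)) != 0 ->
  (perm_mx s)^T *m skew_adj E *m perm_mx s = (skew_adj E)^T ->
  prime p -> odd p ->
  let V1 := col_eigenspace (perm_mx s : 'M['F_p]_n) 1 in
  let Vm1 := col_eigenspace (perm_mx s : 'M['F_p]_n) (-1) in
  (~~ odd n -> \rank V1 = (n %/ 2)%N /\ \rank Vm1 = (n %/ 2)%N) /\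
  (odd n -> \rank V1 = (n.+1 %/ 2)%N /\ \rank Vm1 = (n.-1 %/ 2)%N).
Proof.
move=> orientedE detW PSP prime_p odd_p V1 Vm1.
rewrite skew_adj_tr // in PSP.
have two_neq0 : 2%:R != 0 :> 'F_p.
  rewrite -(dvdn_pcharf (pchar_Fp prime_p)) dvdn_prime2 //.
  by apply: contraTneq odd_p => ->.
have [rank_sub1 rank_subN1] := mxrank_perm_sub_sign detW PSP two_neq0.
have dimV1 : \rank V1 = uphalf n.
  by rewrite mxrank_col_eigenspace rank_sub1 -{1}(half_add_uphalf n) addKn.
have dimVm1 : \rank Vm1 = n./2.
  by rewrite mxrank_col_eigenspace rank_subN1 -{1}(half_add_uphalf n) addnK.
rewrite dimV1 dimVm1 !divn2 -uphalfE.
split=> [even_n | odd_n]; first by rewrite uphalf_half (negbTE even_n).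
by rewrite half_pred_odd.
Qed.
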